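(* Let $\mathcal{A}$ be an Ershov $\mathcal{C}$-algebra. If $\mathcal{A}$ is weakly equationally Noetherian, then every subset of $\mathcal{C}$ that is bounded above in $\mathcal{A}$ has a supremum in $\mathcal{A}$, and this supremum belongs to $\mathcal{C}$.
   Context: An Ershov algebra is a structure $\langle A; \vee, \wedge, \setminus, 0\rangle$ such that $\langle A;\vee,\wedge\rangle$ is a distributive lattice with least element $0$, and $b \setminus a$ is the relative complement: the unique $z$ with $z \wedge a = 0$ and $z \vee a = a \vee b$. An Ershov $\mathcal{C}$-algebra is an Ershov algebra $\mathcal{A}$ together with a distinguished subalgebra $\mathcal{C}$ whose elements are added as constant symbols; $\mathcal{L}$ is the language $\{\vee,\wedge,\setminus,0\}$ plus these constants. An equation is $t(\bar x)=s(\bar x)$ with $t,s$ terms of $\mathcal{L}$. Two systems of equations are equivalent over $\mathcal{A}$ if they have the same solution set. $\mathcal{A}$ is weakly equationally Noetherian if every system of equations (possibly infinite) in finitely many variables is equivalent over $\mathcal{A}$ to some finite system of equations of $\mathcal{L}$. *)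

(* An Ershov algebra is a sectionally complemented
   distributive lattice with bottom: MathComp's [cbDistrLatticeType]
   (join `|`, meet `&`, bottom \bot, relative complement / difference `\`). *)
From HB Require Import structures.
From mathcomp Require Import all_boot all_order.
From Stdlib Require List.
Set Implicit Arguments. Unset Strict Implicit. Unset Printing Implicit Defensive.
Import Order.TTheory.
Local Open Scope order_scope.

Inductive term (T : Type) (V : Type) : Type :=
  | tVar of V
  | tCst of T
  | tZero
  | tJoin of term T V & term T V
  | tMeet of term T V & term T V
  | tDiff of term T V & term T V.

Section Ershov.
Context {d : Order.disp_t} {T : cbDistrLatticeType d}.

Definition is_subalgebra (C : T -> Prop) : Prop :=
  [/\ C \bot,
      (forall x y, C x -> C y -> C (x `|` y)),
      (forall x y, C x -> C y -> C (x `&` y)) &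
      (forall x y, C x -> C y -> C (x `\` y))].

Fixpoint is_Cterm (C : T -> Prop) {V : Type} (t : term T V) : Prop :=
  match t with
  | tVar _ => True
  | tCst c => C c
  | tZero => True
  | tJoin t1 t2 | tMeet t1 t2 | tDiff t1 t2 => is_Cterm C t1 /\ is_Cterm C t2
  end.

Fixpoint eval_term {V : Type} (x : V -> T) (t : term T V) : T :=
  match t with
  | tVar v => x v
  | tCst c => c
  | tZero => \bot
  | tJoin t1 t2 => eval_term x t1 `|` eval_term x t2
  | tMeet t1 t2 => eval_term x t1 `&` eval_term x t2
  | tDiff t1 t2 => eval_term x t1 `\` eval_term x t2
  end.

Definition is_Cequation (C : T -> Prop) {V : Type} (e : term T V * term T V) :=
  is_Cterm C e.1 /\ is_Cterm C e.2.

Definition solves {V : Type} (x : V -> T) (e : term T V * term T V) : Prop :=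
  eval_term x e.1 = eval_term x e.2.

Definition weakly_eq_noetherian (C : T -> Prop) : Prop :=
  forall (n : nat) (S : term T 'I_n * term T 'I_n -> Prop),
    (forall e, S e -> is_Cequation C e) ->
    exists L : seq (term T 'I_n * term T 'I_n),
      (forall e, List.In e L -> is_Cequation C e) /\
      (forall x : 'I_n -> T,
          (forall e, S e -> solves x e) <-> (forall e, List.In e L -> solves x e)).

Definition upper_bound (X : T -> Prop) (a : T) : Prop :=
  forall c, X c -> c <= a.

Definition is_supremum (X : T -> Prop) (s : T) : Prop :=
  upper_bound X s /\ forall a, upper_bound X a -> s <= a.

End Ershov.

(* The upper bounds of X are the solutions of the one-variable system
   {c /\ x = c : c in X}, which weak Noetherianity replaces by a finite
   system L.  Term functions act locally: below y a term only sees its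
   arguments met with y, outside y only its arguments minus y.  So for an
   equation t = s with defect t(0) (+) s(0), every constant solution lies
   above the defect, and a constant solution a can be shrunk to any y <= a
   above the defect.  The join of the defects of L is thus the least upper
   bound of X, and it lies in C, being built from the constants of L. *)
From HB Require Import structures.
From mathcomp Require Import all_boot all_order.
Local Open Scope order_scope.
Import Order.Theory.

Set Implicit Arguments.
Unset Strict Implicit.
Unset Printing Implicit Defensive.

Section ErshovTerms.
Context {d : Order.disp_t} {T : cbDistrLatticeType d}.

Lemma meet_meet_distr_r (x y z : T) : (x `&` y) `&` z = (x `&` z) `&` (y `&` z).
Proof. by rewrite meetACA meetxx. Qed.

Lemma meet_diff_distr_r (x y z : T) : (x `\` y) `&` z = (x `&` z) `\` (y `&` z).
Proof. by rewrite meetBx [RHS]diffxI (diffIx x z z) diffxx meetx0 joinx0. Qed.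

Lemma diff_diff_distr_r (x y z : T) : (x `\` y) `\` z = (x `\` z) `\` (y `\` z).
Proof. by rewrite !diffBx diffKU joinC. Qed.

Section Locality.
Variables (V : Type) (x x' : V -> T) (y : T).

Lemma eval_term_meet_local (t : term T V) :
  (forall v, x v `&` y = x' v `&` y) ->
  eval_term x t `&` y = eval_term x' t `&` y.
Proof.
move=> xx'; elim: t => [v|c||t1 IH1 t2 IH2|t1 IH1 t2 IH2|t1 IH1 t2 IH2] //=.
- by rewrite !meetUl IH1 IH2.
- by rewrite meet_meet_distr_r IH1 IH2 -meet_meet_distr_r.
- by rewrite meet_diff_distr_r IH1 IH2 -meet_diff_distr_r.
Qed.

Lemma eval_term_diff_local (t : term T V) :
  (forall v, x v `\` y = x' v `\` y) ->
  eval_term x t `\` y = eval_term x' t `\` y.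
Proof.
move=> xx'; elim: t => [v|c||t1 IH1 t2 IH2|t1 IH1 t2 IH2|t1 IH1 t2 IH2] //=.
- by rewrite !diffUx IH1 IH2.
- by rewrite !diffIx IH1 IH2.
- by rewrite diff_diff_distr_r IH1 IH2 -diff_diff_distr_r.
Qed.

End Locality.

Variable V : Type.

Definition eval_at_bot (t : term T V) : T := eval_term (fun=> \bot) t.

Definition defect (e : term T V * term T V) : T :=
  (eval_at_bot e.1 `\` eval_at_bot e.2) `|` (eval_at_bot e.2 `\` eval_at_bot e.1).

Definition defects (L : seq (term T V * term T V)) : T := \join_(e <- L) defect e.

Lemma eval_term_diff_bounded (x : V -> T) (a : T) (t : term T V) :
  (forall v, x v <= a) -> eval_term x t `\` a = eval_at_bot t `\` a.
Proof.
move=> xa; apply: eval_term_diff_local => v.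
by rewrite diff0x; apply/eqP; rewrite diff_eq0.
Qed.

Lemma defect_le_bound (x : V -> T) (a : T) (e : term T V * term T V) :
  (forall v, x v <= a) -> solves x e -> defect e <= a.
Proof.
case: e => t s xa; rewrite /solves /defect /= => xts.
have t_a := eval_term_diff_bounded t xa.
have s_a := eval_term_diff_bounded s xa.
rewrite xts in t_a.
by rewrite leUx; apply/andP; split;
  rewrite -diff_eq0 diff_diff_distr_r -t_a s_a diffxx.
Qed.

(* Below y the solution x is untouched, and outside y both sides reduce to
   their values at bot, which agree modulo y because the defect is below y. *)
Lemma solves_meet_defect (x : V -> T) (y : T) (e : term T V * term T V) :
  defect e <= y -> solves x e -> solves (fun v => x v `&` y) e.
Proof.
case: e => t s; rewrite /solves /defect /= => ey xts.
have meet_y r : eval_term (fun v => x v `&` y) r `&` y = eval_term x r `&` y.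
  by apply: eval_term_meet_local => v; rewrite -meetA meetxx.
have diff_y r : eval_term (fun v => x v `&` y) r `\` y = eval_at_bot r `\` y.
  by apply: eval_term_diff_bounded => v; apply: leIr.
have bot_y : eval_at_bot t `\` y = eval_at_bot s `\` y.
  move: ey; rewrite leUx !leBLR => /andP[ts st].
  apply: le_anti; rewrite !leBLR.
  by rewrite (le_trans ts) ?(le_trans st) // leUx leUl /= -leBLR leBl.
rewrite -(joinIB y (eval_term _ t)) -(joinIB y (eval_term _ s)).
by rewrite !meet_y !diff_y xts bot_y.
Qed.

Lemma defects_le_const_solution (L : seq (term T V * term T V)) (a : T) :
  (forall e, List.In e L -> solves (fun=> a) e) -> defects L <= a.
Proof.
rewrite /defects; elim: L => [|e L IH] La; first by rewrite big_nil le0x.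
rewrite big_cons leUx; apply/andP; split.
- by apply: (defect_le_bound (fun=> lexx a)); apply: La; left.
- by apply: IH => e' Le'; apply: La; right.
Qed.

Lemma defect_le_defects (L : seq (term T V * term T V)) e :
  List.In e L -> defect e <= defects L.
Proof.
rewrite /defects; elim: L => [|e' L IH] //= [<-|Le]; rewrite big_cons.
- exact: leUl.
- exact: le_trans (IH Le) (leUr _ _).
Qed.

Lemma defects_const_solution (L : seq (term T V * term T V)) (a : T) :
  (forall e, List.In e L -> solves (fun=> a) e) ->
  forall e, List.In e L -> solves (fun=> defects L) e.
Proof.
move=> La e Le.
have := solves_meet_defect (defect_le_defects Le) (La e Le).
by rewrite /= (meet_idPr (defects_le_const_solution La)).
Qed.

Lemma subalgebra_eval_at_bot (C : T -> Prop) (t : term T V) :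
  is_subalgebra C -> is_Cterm C t -> C (eval_at_bot t).
Proof.
case=> C0 CU CI CB; rewrite /eval_at_bot.
elim: t => [v|c||t1 IH1 t2 IH2|t1 IH1 t2 IH2|t1 IH1 t2 IH2] //= [Ct1 Ct2].
- exact: CU (IH1 Ct1) (IH2 Ct2).
- exact: CI (IH1 Ct1) (IH2 Ct2).
- exact: CB (IH1 Ct1) (IH2 Ct2).
Qed.

Lemma subalgebra_defects (C : T -> Prop) (L : seq (term T V * term T V)) :
  is_subalgebra C -> (forall e, List.In e L -> is_Cequation C e) ->
  C (defects L).
Proof.
move=> subC; have [C0 CU _ CB] := subC; rewrite /defects.
elim: L => [|e L IH] CL; first by rewrite big_nil.
rewrite big_cons; apply: (CU); last by apply: IH => e' Le'; apply: CL; right.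
have [Ct Cs] := CL e (or_introl erefl).
by apply: CU; apply: CB; apply: subalgebra_eval_at_bot.
Qed.

End ErshovTerms.

Section UpperBounds.
Context {d : Order.disp_t} {T : cbDistrLatticeType d}.

Definition upper_bound_system (X : T -> Prop) (e : term T 'I_1 * term T 'I_1) :=
  exists2 c, X c & e = (tMeet (tCst 'I_1 c) (tVar T ord0), tCst 'I_1 c).

Lemma upper_bound_systemP (X : T -> Prop) (a : T) :
  (forall e, upper_bound_system X e -> solves (fun=> a) e) <-> upper_bound X a.
Proof.
split=> [solX c Xc | aX e [c Xc ->]]; apply/meet_idPl.
- exact: (solX _ (ex_intro2 _ _ c Xc erefl)).
- exact: aX.
Qed.

Lemma upper_bound_system_Cequation (C : T -> Prop) (X : T -> Prop) e :
  (forall c, X c -> C c) -> upper_bound_system X e -> is_Cequation C e.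
Proof. by move=> XC [c Xc ->]; split; [split|]; rewrite //=; apply: XC. Qed.

End UpperBounds.

Theorem mainTheorem7 (d : Order.disp_t) (T : cbDistrLatticeType d)
    (C : T -> Prop) :
  is_subalgebra C ->
  weakly_eq_noetherian C ->
  forall X : T -> Prop,
    (forall c, X c -> C c) ->
    (exists a : T, upper_bound X a) ->
    exists s : T, is_supremum X s /\ C s.
Proof.
move=> subC noethC X XC [a Xa].
have [L [CL solL]] :=
  noethC 1 (upper_bound_system X) (fun e => upper_bound_system_Cequation XC).
have boundL b : upper_bound X b <-> forall e, List.In e L -> solves (fun=> b) e.
  by rewrite -upper_bound_systemP; exact: solL.
have La := proj1 (boundL a) Xa.
exists (defects L); split; last exact: subalgebra_defects.
split; first exact/boundL/(defects_const_solution La).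
by move=> b /boundL; apply: defects_le_const_solution.
Qed.
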